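(* $\displaystyle T_2(z)=\sum_{c\ge0}T(2,c)z^c=\frac{1+2z^2-z^3}{1-2z-2z^3+z^4}.$
   Context: A tatami tiling of the $r\times c$ rectangular grid is a tiling by monomers ($1\times1$ tiles) and dimers ($1\times2$ or $2\times1$ tiles) such that no point is a corner of four distinct tiles. $T(r,c)$ denotes the total number of tatami tilings of the $r\times c$ grid (with any number of monomers), with the convention $T(r,0)=1$ (the empty tiling). *)

From mathcomp Require Import all_boot all_order all_algebra.
Set Implicit Arguments. Unset Strict Implicit. Unset Printing Implicit Defensive.
Import GRing.Theory.

Definition cell (r c : nat) := ('I_r * 'I_c)%type.

Definition adjacent (r c : nat) (x y : cell r c) : bool :=
  ((x.1 == y.1 :> nat) && ((x.2.+1 == y.2 :> nat) || (y.2.+1 == x.2 :> nat))) ||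
  ((x.2 == y.2 :> nat) && ((x.1.+1 == y.1 :> nat) || (y.1.+1 == x.1 :> nat))).

Definition is_tile (r c : nat) (A : {set cell r c}) : bool :=
  (#|A| == 1) || [exists x, exists y, adjacent x y && (A == [set x; y])].

Definition md_tiling (r c : nat) (P : {set {set cell r c}}) : bool :=
  partition P [set: cell r c] && [forall A in P, is_tile A].

(* Tatami condition: no interior grid point is a corner of four distinct
   tiles, i.e. for every 2x2 block of cells x = (i,j), (i,j+1), (i+1,j),
   y = (i+1,j+1), the four cells do not lie in four pairwise distinct tiles. *)
Definition tatami (r c : nat) (P : {set {set cell r c}}) : bool :=
  md_tiling P &&
  [forall x : cell r c, forall y : cell r c,
     ((x.1.+1 == y.1 :> nat) && (x.2.+1 == y.2 :> nat)) ==>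
     ~~ uniq [:: pblock P x; pblock P (x.1, y.2); pblock P (y.1, x.2); pblock P y]].

(* T(r,c): number of tatami tilings of the r x c grid (T(r,0) = 1: only the
   empty tiling). *)
Definition T (r c : nat) : nat := #|[set P : {set {set cell r c}} | tatami P]|.

From mathcomp Require Import all_boot all_order all_algebra.
From mathcomp Require Import zify.
Import GRing.Theory.
Set Implicit Arguments. Unset Strict Implicit. Unset Printing Implicit Defensive.

(* A tatami tiling of the 2 x c grid is determined by the kinds of its cells,
   read column by column, and a sequence of column profiles comes from a tiling
   iff consecutive columns agree on the horizontal dimers between them, no
   dimer leaves the grid and, by the tatami condition, a column with neither a
   vertical dimer nor a dimer crossing to the next column is followed by a
   vertical dimer.  These sequences are the words accepted by a five-state
   automaton, whose transfer equations give
   T(2,c+4) + T(2,c) = 2 T(2,c+3) + 2 T(2,c+1); with T(2,c) = 1, 2, 6, 13 for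
   c < 4 this is the stated rational generating function. *)

(* The kind of a cell: 0 monomer, 1 right half and 2 left half of a
   horizontal dimer, 3 half of a vertical dimer.  A profile lists the kinds
   of the (top, bottom) cells of a column. *)
Definition profile := (nat * nat)%type.

Definition profiles : seq profile := [seq (a, b) | a <- iota 0 4, b <- iota 0 4].

Fixpoint profile_words n : seq (seq profile) :=
  if n is n'.+1 then [seq y :: w | y <- profiles, w <- profile_words n']
  else [:: [::]].

Definition valid_profile (y : profile) :=
  [&& y.1 < 4, y.2 < 4 & (y.1 == 3) == (y.2 == 3)].

(* What a column imposes on the next one: class 0 nothing (vertical column,
   or no column yet), 1 a vertical dimer (tatami condition), 2, 3, 4 a right
   half in the top row, the bottom row, both rows. *)
Definition profile_class (y : profile) : nat :=
  if y.1 == 3 then 0 else if (y.1 == 2) && (y.2 == 2) then 4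
  else if y.1 == 2 then 2 else if y.2 == 2 then 3 else 1.

Definition fits (k : nat) (y : profile) :=
  [&& valid_profile y, (y.1 == 1) == ((k == 2) || (k == 4)),
      (y.2 == 1) == ((k == 3) || (k == 4)) & (k == 1) ==> (y.1 == 3)].

(* At the right end the boundary acts as a vertical column, so the last
   column must not leave a right half pending. *)
Fixpoint accepts (k : nat) (s : seq profile) : bool :=
  if s is y :: w then fits k y && accepts (profile_class y) w else k <= 1.

Definition accepted_count n k := count (accepts k) (profile_words n).

Lemma count_accepts_allpairs k (L : seq profile) W :
  count (accepts k) [seq y :: w | y <- L, w <- W] =
  sumn [seq (if fits k y then count (accepts (profile_class y)) W else 0) | y <- L].
Proof.
elim: L => //= y L IH; rewrite count_cat IH count_map; congr (_ + _).
case: ifP => fy; last rewrite -(count_pred0 W);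
  by apply: eq_count => w; rewrite /preim /= fy.
Qed.

Lemma accepted_count_transfer n :
  let F := accepted_count n in let F' := accepted_count n.+1 in
  [/\ F' 0 = F 0 + F 1 + F 2 + F 3 + F 4, F' 1 = F 0, F' 2 = F 1 + F 3,
      F' 3 = F 1 + F 2 & F' 4 = F 1].
Proof.
have step k : accepted_count n.+1 k = sumn [seq (if fits k y then
    accepted_count n (profile_class y) else 0) | y <- profiles].
  exact: count_accepts_allpairs.
by rewrite /= !step /= /profile_class /=; split; lia.
Qed.

Lemma accepted_count_rec n :
  accepted_count n.+4 0 + accepted_count n 0 =
  2 * accepted_count n.+3 0 + 2 * accepted_count n.+1 0.
Proof.
have [a0 a1 a2 a3 a4] := accepted_count_transfer n.
have [b0 b1 b2 b3 b4] := accepted_count_transfer n.+1.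
have [c0 c1 c2 c3 c4] := accepted_count_transfer n.+2.
have [d0 d1 d2 d3 d4] := accepted_count_transfer n.+3.
lia.
Qed.

Lemma accepted_count_init :
  [/\ accepted_count 0 0 = 1, accepted_count 1 0 = 2,
      accepted_count 2 0 = 6 & accepted_count 3 0 = 13].
Proof. by split; vm_compute. Qed.

Definition end_profile : profile := (3, 3).

(* Columns beyond the last one read as vertical, so that no dimer leaves the grid. *)
Definition column (s : seq profile) j := nth end_profile s j.

Lemma column_default s j : size s <= j -> column s j = end_profile.
Proof. by move=> h; rewrite /column nth_default. Qed.

Definition follows (x y : profile) := fits (profile_class x) y.

Lemma followsE x y : valid_profile x -> follows x y =
  [&& valid_profile y, (y.1 == 1) == (x.1 == 2), (y.2 == 1) == (x.2 == 2) &
      [&& x.1 != 3, x.1 != 2 & x.2 != 2] ==> (y.1 == 3)].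
Proof.
case: x => a b; rewrite /valid_profile /follows /fits /profile_class /=.
case/and3P; case: a => [|[|[|[|a]]]] // _; case: b => [|[|[|[|b]]]] //.
Qed.

Lemma follows_end x : follows x end_profile = (profile_class x <= 1).
Proof. by rewrite /follows /fits /valid_profile /profile_class /=; do !case: ifP. Qed.

Lemma accepts_columns x s : accepts (profile_class x) s <->
  follows x (column s 0) /\
  (forall j, j < size s -> follows (column s j) (column s j.+1)).
Proof.
elim: s x => [|y w IH] x /=; first by rewrite /column /= follows_end; split => [->|[]].
split.
- case/andP => hxy /IH [h0 hj]; split => // -[|j] hj' //=.
  exact: hj.
- case=> hxy hj; apply/andP; split=> //; apply/IH; split; first exact: (hj 0).
  by move=> j hjw; apply: (hj j.+1).
Qed.

Definition admissible (s : seq profile) :=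
 [/\ (forall j, valid_profile (column s j)),
     (forall j, ((column s j).1 == 2) = ((column s j.+1).1 == 1)),
     (forall j, ((column s j).2 == 2) = ((column s j.+1).2 == 1)),
     ((column s 0).1 != 1) && ((column s 0).2 != 1) &
     (forall j, (column s j).1 != 3 -> (column s j).1 != 2 -> (column s j).2 != 2 ->
        (column s j.+1).1 == 3)].

Lemma accepts_admissible s : accepts 0 s <-> admissible s.
Proof.
rewrite -[0]/(profile_class end_profile) accepts_columns; split.
- case=> h0 hj.
  have hf j : follows (column s j) (column s j.+1).
    have [hjs|hjs] := ltnP j (size s); first exact: hj.
    by rewrite !column_default // (leq_trans hjs).
  have hv j : valid_profile (column s j).
    by elim: j => [|j IH]; [move: h0 | move: (hf j)]; rewrite followsE // => /andP [].
  split => //.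
  + by move=> j; have := hf j; rewrite followsE // => /and4P [_ /eqP -> _ _].
  + by move=> j; have := hf j; rewrite followsE // => /and4P [_ _ /eqP -> _].
  + by move: h0; rewrite followsE // => /and4P [_ /eqP -> /eqP -> _].
  + move=> j a b e; have := hf j; rewrite followsE // => /and4P [_ _ _].
    by rewrite a b e.
- case=> hv h1 h2 /andP [h01 h02] h5; split.
    by rewrite followsE // hv /= (negbTE h01) (negbTE h02).
  move=> j _; rewrite followsE // hv -h1 -h2 !eqxx /=.
  by apply/implyP => /and3P [a b e]; apply: h5.
Qed.

Lemma cell_eq c (x y : cell 2 c) : x.1 = y.1 -> (x.2 = y.2 :> nat) -> x = y.
Proof. by case: x y => [a b] [a' b'] /= -> /val_inj ->. Qed.

Lemma ord2_other_eq (a b e : 'I_2) : a != e -> b != e -> a = b.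
Proof.
by case: a => [[|[|//]] ?]; case: b => [[|[|//]] ?]; case: e => [[|[|//]] ?];
  rewrite -!val_eqE //= => _ _; apply/val_inj.
Qed.

Definition other_row (i : 'I_2) : 'I_2 := if val i == 0 then ord_max else ord0.

Lemma other_row_neq (i : 'I_2) : i != other_row i.
Proof. by case: i => [[|[|//]] ?]; rewrite /other_row -val_eqE. Qed.

Definition kind_in c (P : {set {set cell 2 c}}) (x : cell 2 c) : nat :=
  if [exists y, (y \in pblock P x) && (y.2 == x.2 :> nat) && (y.1 != x.1)] then 3
  else if [exists y, (y \in pblock P x) && (y.1 == x.1) && (y.2 == x.2.+1 :> nat)]
  then 2
  else if [exists y, (y \in pblock P x) && (y.1 == x.1) && (y.2.+1 == x.2 :> nat)]
  then 1 else 0.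

Definition top : 'I_2 := ord0.
Definition bottom : 'I_2 := ord_max.

Definition tiling_profile c (P : {set {set cell 2 c}}) : seq profile :=
  [seq (kind_in P (top, j), kind_in P (bottom, j)) | j <- enum 'I_c].

Lemma size_tiling_profile c (P : {set {set cell 2 c}}) : size (tiling_profile P) = c.
Proof. by rewrite size_map size_enum_ord. Qed.

Lemma nth_tiling_profile c (P : {set {set cell 2 c}}) (j : 'I_c) :
  nth end_profile (tiling_profile P) j = (kind_in P (top, j), kind_in P (bottom, j)).
Proof. by rewrite (nth_map j) ?size_enum_ord // nth_ord_enum. Qed.

Section ProfileTiling.
Variable c : nat.
Variable s : seq profile.

Definition kind_at (i j : nat) : nat :=
  if i == 0 then (column s j).1 else (column s j).2.

Definition cell_kind (x : cell 2 c) : nat := kind_at x.1 x.2.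

Definition same_tile (x y : cell 2 c) : bool :=
  [|| x == y,
      [&& cell_kind x == 3, x.2 == y.2 :> nat & x.1 != y.1],
      [&& cell_kind x == 2, x.1 == y.1 & x.2.+1 == y.2 :> nat] |
      [&& cell_kind x == 1, x.1 == y.1 & y.2.+1 == x.2 :> nat]].

Lemma same_tile_refl x : same_tile x x.
Proof. by rewrite /same_tile eqxx. Qed.

Lemma same_tile_vertical x y : same_tile x y -> y.1 != x.1 -> cell_kind x == 3.
Proof.
case/or4P => [/eqP ->|/and3P [//]|/and3P [_ /eqP ->]|/and3P [_ /eqP ->]];
  by rewrite eqxx.
Qed.

Lemma same_tile_right x y : same_tile x y -> (y.2 == x.2.+1 :> nat) -> cell_kind x == 2.
Proof.
by case/or4P => [/eqP ->|/and3P [_ /eqP -> _]|/and3P [//]|/and3P [_ _ /eqP <-]] /eqP;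
  lia.
Qed.

Lemma same_tile_left x y : same_tile x y -> (y.2.+1 == x.2 :> nat) -> cell_kind x == 1.
Proof.
by case/or4P => [/eqP ->|/and3P [_ /eqP -> _]|/and3P [_ _ /eqP <-]|/and3P [//]] /eqP;
  lia.
Qed.

Lemma same_tile_row_or_column x y :
  same_tile x y -> (y.1 == x.1) || (y.2 == x.2 :> nat).
Proof.
case/or4P => [/eqP ->|/and3P [_ /eqP ->]|/and3P [_ /eqP ->]|/and3P [_ /eqP ->]];
  by rewrite !eqxx ?orbT.
Qed.

Hypothesis size_s : size s = c.
Hypothesis adm_s : admissible s.

Lemma kind_at_lt i j : kind_at i j < 4.
Proof.
case: adm_s => hv _ _ _ _; have := hv j; rewrite /kind_at /valid_profile.
by case/and3P => ? ?; case: ifP.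
Qed.

Lemma kind_at_vertical i i' j : (kind_at i j == 3) = (kind_at i' j == 3).
Proof.
case: adm_s => hv _ _ _ _; have := hv j; rewrite /kind_at /valid_profile.
by case/and3P => _ _ /eqP e; do 2 case: ifP => _ //.
Qed.

Lemma kind_at_right i j : (kind_at i j == 2) = (kind_at i j.+1 == 1).
Proof. by case: adm_s => _ h1 h2 _ _; rewrite /kind_at; case: ifP. Qed.

Lemma kind_at_beyond i j : c <= j -> kind_at i j = 3.
Proof. by move=> h; rewrite /kind_at column_default ?size_s //; case: ifP. Qed.

Lemma kind_at_first i : kind_at i 0 != 1.
Proof. by case: adm_s => _ _ _ /andP [a b] _; rewrite /kind_at; case: ifP. Qed.

Lemma kind_at_tatami j : kind_at 0 j != 3 -> kind_at 0 j != 2 -> kind_at 1 j != 2 ->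
  kind_at 0 j.+1 == 3.
Proof. by case: adm_s => _ _ _ _; apply. Qed.

Lemma same_tile_sym x y : same_tile x y -> same_tile y x.
Proof.
rewrite /same_tile /cell_kind; case/or4P.
- by move/eqP => ->; rewrite eqxx.
- case/and3P => k e n; apply/or4P/Or42/and3P; split.
  + by rewrite (kind_at_vertical _ x.1) -(eqP e).
  + by rewrite eq_sym.
  + by rewrite eq_sym.
- case/and3P => k /eqP e e2; apply/or4P/Or44/and3P; split => //.
  + by rewrite -(eqP e2) -e -kind_at_right.
  + by rewrite e.
- case/and3P => k /eqP e e2; apply/or4P/Or43/and3P; split => //.
  + by rewrite -e kind_at_right (eqP e2).
  + by rewrite e.
Qed.

Lemma same_tile_partner x y z :
  same_tile x y -> same_tile x z -> y != x -> z != x -> y = z.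
Proof.
rewrite /same_tile => hy hz ny nz.
move: hy hz; rewrite [x == y]eq_sym [x == z]eq_sym (negbTE ny) (negbTE nz) /=.
case/or3P => /and3P [/eqP k a b]; case/or3P => /and3P [/eqP k' a' b'];
  rewrite k in k' => //.
- apply: cell_eq; last by rewrite -(eqP a) -(eqP a').
  by apply: (@ord2_other_eq _ _ x.1); rewrite eq_sym.
- by apply: cell_eq; [rewrite -(eqP a) -(eqP a') | rewrite -(eqP b) -(eqP b')].
- apply: cell_eq; first by rewrite -(eqP a) -(eqP a').
  by apply/succn_inj; rewrite (eqP b) (eqP b').
Qed.

Lemma same_tile_adjacent x y : same_tile x y -> y != x -> adjacent x y.
Proof.
rewrite /same_tile /adjacent => hy ny; move: hy.
rewrite [x == y]eq_sym (negbTE ny) /=.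
case/or3P => /and3P [_ a b]; last 2 first.
- by rewrite (eqP a) eqxx b.
- by rewrite (eqP a) eqxx b orbT.
apply/orP; right; rewrite a /=.
by move: b; case: x.1 y.1 => [[|[|//]] ?] [[|[|//]] ?]; rewrite -val_eqE.
Qed.

Lemma same_tile_trans x y z : same_tile x y -> same_tile x z = same_tile y z.
Proof.
move=> hxy; have [<-|nyx] := eqVneq y x; first by [].
apply/idP/idP => h.
- have [->|nzx] := eqVneq z x; first exact: same_tile_sym.
  by rewrite (same_tile_partner hxy h nyx nzx) same_tile_refl.
- have [->|nzy] := eqVneq z y; first exact: hxy.
  by rewrite -(same_tile_partner (same_tile_sym hxy) h _ nzy) ?same_tile_refl // eq_sym.
Qed.

Lemma same_tile_equiv : {in [set: cell 2 c] & &, equivalence_rel same_tile}.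
Proof.
by move=> x y z _ _ _; split; [exact: same_tile_refl | exact: same_tile_trans].
Qed.

Definition tiling_of := equivalence_partition same_tile [set: cell 2 c].

Lemma tiling_of_partition : partition tiling_of [set: cell 2 c].
Proof. exact: equivalence_partitionP same_tile_equiv. Qed.

Lemma mem_pblock_tiling_of x y : (y \in pblock tiling_of x) = same_tile x y.
Proof. by rewrite (pblock_equivalence_partition same_tile_equiv) ?inE. Qed.

Lemma pblock_tiling_of_eq x y : same_tile x y -> pblock tiling_of y = pblock tiling_of x.
Proof.
move=> h; apply: same_pblock; first by case/and3P: tiling_of_partition.
by rewrite mem_pblock_tiling_of.
Qed.

Lemma tiling_of_md : md_tiling tiling_of.
Proof.
rewrite /md_tiling tiling_of_partition /=; apply/forallP => A; apply/implyP.
case/imsetP => x _ ->.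
case: (pickP (fun y => (y != x) && same_tile x y)) => [y /andP [ny hy] | none].
- have -> : [set y0 in [set: cell 2 c] | same_tile x y0] = [set x; y].
    apply/setP => z; rewrite !inE /=; apply/idP/idP.
    + move=> hz; have [->|nzx] := eqVneq z x; first by [].
      by rewrite (same_tile_partner hz hy nzx ny) eqxx orbT.
    + by case/orP => /eqP ->; rewrite ?same_tile_refl.
  apply/orP; right; apply/existsP; exists x; apply/existsP; exists y.
  by rewrite same_tile_adjacent // eqxx.
- have -> : [set y0 in [set: cell 2 c] | same_tile x y0] = [set x].
    apply/setP => z; rewrite !inE /=; apply/idP/idP; last first.
      by move/eqP ->; rewrite same_tile_refl.
    by move=> hz; apply/negPn/negP => nzx; have := none z; rewrite nzx hz.
  by rewrite /is_tile cards1 eqxx.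
Qed.

Lemma tiling_of_tatami : tatami tiling_of.
Proof.
rewrite /tatami tiling_of_md /=; apply/forallP => x; apply/forallP => y.
apply/implyP => /andP [e1 e2].
have [x10 y11] : x.1 = 0 :> nat /\ y.1 = 1 :> nat.
  by move: (nat_of_ord x.1) (nat_of_ord y.1) e1 (ltn_ord y.1) => a b /eqP; lia.
have n01 : x.1 != y.1 by rewrite -val_eqE /= x10 y11.
(* Some side of the 2 x 2 block lies inside a tile, whose two cells then
   have the same block. *)
have [k3|n3] := eqVneq (cell_kind x) 3.
  have h : same_tile x (y.1, x.2) by apply/or4P/Or42; rewrite /= k3 n01 !eqxx.
  by rewrite (pblock_tiling_of_eq h) /= !inE !eqxx ?orbT ?andbF.
have [k2|n2] := eqVneq (cell_kind x) 2.
  have h : same_tile x (x.1, y.2) by apply/or4P/Or43; rewrite /= k2 e2 !eqxx.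
  by rewrite (pblock_tiling_of_eq h) /= !inE !eqxx ?orbT ?andbF.
have [k2'|n2'] := eqVneq (cell_kind (y.1, x.2)) 2.
  have h : same_tile (y.1, x.2) y by apply/or4P/Or43; rewrite /= k2' e2 !eqxx.
  by rewrite (pblock_tiling_of_eq h) /= !inE !eqxx ?orbT ?andbF.
have k3' : cell_kind (x.1, y.2) == 3.
  by move: n3 n2 n2'; rewrite /cell_kind /= x10 y11 -(eqP e2); exact: kind_at_tatami.
have h : same_tile (x.1, y.2) y by apply/or4P/Or42; rewrite /= k3' n01 !eqxx.
by rewrite (pblock_tiling_of_eq h) /= !inE !eqxx ?orbT ?andbF.
Qed.

Lemma tiling_of_vertical x :
  [exists y, (y \in pblock tiling_of x) && (y.2 == x.2 :> nat) && (y.1 != x.1)]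
  = (cell_kind x == 3).
Proof.
apply/existsP/idP.
- case=> y; rewrite mem_pblock_tiling_of => /andP [/andP [h _]].
  exact: same_tile_vertical.
- move=> k; exists (other_row x.1, x.2).
  rewrite mem_pblock_tiling_of /= eqxx eq_sym other_row_neq !andbT.
  by apply/or4P/Or42; rewrite /= k other_row_neq eqxx.
Qed.

Lemma tiling_of_right x :
  [exists y, (y \in pblock tiling_of x) && (y.1 == x.1) && (y.2 == x.2.+1 :> nat)]
  = (cell_kind x == 2).
Proof.
apply/existsP/idP.
- case=> y; rewrite mem_pblock_tiling_of => /andP [/andP [h _]].
  exact: same_tile_right.
- move=> k; have hl : x.2.+1 < c.
    rewrite ltnNge; apply/negP => h.
    by move: k; rewrite /cell_kind kind_at_right kind_at_beyond.
  exists (x.1, Ordinal hl); rewrite mem_pblock_tiling_of /= !eqxx !andbT.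
  by apply/or4P/Or43; rewrite /= k !eqxx.
Qed.

Lemma tiling_of_left x :
  [exists y, (y \in pblock tiling_of x) && (y.1 == x.1) && (y.2.+1 == x.2 :> nat)]
  = (cell_kind x == 1).
Proof.
apply/existsP/idP.
- case=> y; rewrite mem_pblock_tiling_of => /andP [/andP [h _]].
  exact: same_tile_left.
- move=> k; have hp : 0 < x.2.
    rewrite lt0n; apply: contraTneq k => h.
    by rewrite /cell_kind h (negbTE (kind_at_first _)).
  have hl : x.2.-1 < c := leq_ltn_trans (leq_pred _) (ltn_ord _).
  exists (x.1, Ordinal hl); rewrite mem_pblock_tiling_of /= prednK // !eqxx !andbT.
  by apply/or4P/Or44; rewrite /= k prednK // !eqxx.
Qed.

Lemma kind_in_tiling_of x : kind_in tiling_of x = cell_kind x.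
Proof.
rewrite /kind_in tiling_of_vertical tiling_of_right tiling_of_left.
have := kind_at_lt x.1 x.2; rewrite -/(cell_kind x).
by case: (cell_kind x) => [|[|[|[|]]]].
Qed.

Lemma tiling_profile_of : tiling_profile tiling_of = s.
Proof.
apply: (@eq_from_nth _ end_profile); rewrite ?size_tiling_profile ?size_s // => j hj.
rewrite (nth_tiling_profile tiling_of (Ordinal hj)) !kind_in_tiling_of.
by rewrite /cell_kind /kind_at /column /=; case: (nth end_profile s j).
Qed.

End ProfileTiling.

Lemma cell_kind_tiling_profile c (P : {set {set cell 2 c}}) x :
  cell_kind (tiling_profile P) x = kind_in P x.
Proof.
case: x => [i j]; rewrite /cell_kind /kind_at /column /= nth_tiling_profile.
by case: i => [[|[|//]] ?] /=; congr kind_in; congr pair; apply: val_inj.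
Qed.

Lemma kind_in_lt c (P : {set {set cell 2 c}}) x : kind_in P x < 4.
Proof. by rewrite /kind_in; do !case: ifP. Qed.

Lemma adjacent_sym r c (x y : cell r c) : adjacent x y = adjacent y x.
Proof.
rewrite /adjacent (eq_sym (nat_of_ord x.1)) (eq_sym (nat_of_ord x.2)).
by rewrite [(x.2.+1 == _) || _]orbC [(x.1.+1 == _) || _]orbC.
Qed.

Lemma tile_partner r c (B : {set cell r c}) x y :
  is_tile B -> x \in B -> y \in B -> y != x ->
  adjacent x y /\ (forall z, z \in B -> z != x -> z = y).
Proof.
case/orP.
  by case/cards1P => a -> /set1P -> /set1P ->; rewrite eqxx.
case/existsP => a /existsP [b /andP [ab /eqP ->]].
rewrite !inE => /orP [] /eqP -> /orP [] /eqP -> //; rewrite ?eqxx // => _.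
- by split => // z; rewrite !inE => /orP [] /eqP -> //; rewrite eqxx.
- split; first by rewrite adjacent_sym.
  by move=> z; rewrite !inE => /orP [] /eqP -> //; rewrite eqxx.
Qed.

Section MdTiling.
Variables r c : nat.
Variable P : {set {set cell r c}}.
Hypothesis tiling_P : md_tiling P.

Lemma md_tiling_partition : partition P [set: cell r c].
Proof. by case/andP: tiling_P. Qed.

Lemma mem_pblock_self x : x \in pblock P x.
Proof.
by case/and3P: md_tiling_partition => /eqP cov _ _; rewrite mem_pblock cov inE.
Qed.

Lemma pblock_tile x : is_tile (pblock P x).
Proof.
case/andP: tiling_P => /and3P [/eqP cov _ _] /forallP h.
by apply: (implyP (h _)); apply: pblock_mem; rewrite cov inE.
Qed.

Lemma pblock_partner x y z :
  y \in pblock P x -> z \in pblock P x -> y != x -> z != x -> z = y.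
Proof.
move=> hy hz ny nz.
by case: (tile_partner (pblock_tile x) (mem_pblock_self x) hy ny) => _; apply.
Qed.

Lemma pblock_adjacent x y : y \in pblock P x -> y != x -> adjacent x y.
Proof.
by move=> hy ny; case: (tile_partner (pblock_tile x) (mem_pblock_self x) hy ny).
Qed.

Lemma eq_pblock_tiling x y : (pblock P x == pblock P y) = (y \in pblock P x).
Proof.
by case/and3P: md_tiling_partition => /eqP cov tI _; rewrite eq_pblock // cov inE.
Qed.

Lemma mem_pblock_sym x y : (y \in pblock P x) = (x \in pblock P y).
Proof. by rewrite -!eq_pblock_tiling eq_sym. Qed.

End MdTiling.

Section TilingProfile.
Variable c : nat.
Variable P : {set {set cell 2 c}}.
Hypothesis tiling_P : md_tiling P.

Local Notation profile_P := (tiling_profile P).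

Lemma kind_in_vertical x y : y \in pblock P x -> y.1 != x.1 -> kind_in P x = 3.
Proof.
move=> hy n; rewrite /kind_in; case: existsP => // -[]; exists y; rewrite hy n andbT.
have nyx : y != x by apply: contraNneq n => ->.
case/orP: (pblock_adjacent tiling_P hy nyx) => /andP [e _]; last by rewrite eq_sym.
by move: n; rewrite -val_eqE eq_sym e.
Qed.

Lemma kind_in_right x y : y \in pblock P x -> y.1 = x.1 -> y.2 = x.2.+1 :> nat ->
  kind_in P x = 2.
Proof.
move=> hy e1 e2; have nyx : y != x by apply/negP => /eqP yx; move: e2; rewrite yx; lia.
rewrite /kind_in; case: existsP => [[z /andP [/andP [hz _] n]]|_].
  have nzx : z != x by apply: contraNneq n => ->.
  by move: n; rewrite (pblock_partner tiling_P hy hz nyx nzx) e1 eqxx.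
by case: existsP => // -[]; exists y; rewrite hy e1 e2 !eqxx.
Qed.

Lemma kind_in_left x y : y \in pblock P x -> y.1 = x.1 -> y.2.+1 = x.2 :> nat ->
  kind_in P x = 1.
Proof.
move=> hy e1 e2; have nyx : y != x by apply/negP => /eqP yx; move: e2; rewrite yx; lia.
rewrite /kind_in; case: existsP => [[z /andP [/andP [hz _] n]]|_].
  have nzx : z != x by apply: contraNneq n => ->.
  by move: n; rewrite (pblock_partner tiling_P hy hz nyx nzx) e1 eqxx.
case: existsP => [[z /andP [/andP [hz _] n]]|_].
  have nzx : z != x by apply/negP => /eqP zx; move: n; rewrite zx ltn_eqF.
  by move: n; rewrite (pblock_partner tiling_P hy hz nyx nzx) -e2 ltn_eqF // ltnW.
by case: existsP => // -[]; exists y; rewrite hy e1 e2 !eqxx.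
Qed.

Lemma mem_pblock_same_tile x y : (y \in pblock P x) = same_tile profile_P x y.
Proof.
apply/idP/idP.
- move=> hy; have [<-|nyx] := eqVneq y x; first exact: same_tile_refl.
  rewrite /same_tile cell_kind_tiling_profile.
  case/orP: (pblock_adjacent tiling_P hy nyx) => /andP [/eqP a b]; last first.
    have n : y.1 != x.1 by apply: contraNneq nyx => e; apply/eqP/cell_eq.
    by apply/or4P/Or42; rewrite (kind_in_vertical hy n) a !eqxx eq_sym.
  have a' : y.1 = x.1 by apply: val_inj.
  case/orP: b => /eqP b.
  + by apply/or4P/Or43; rewrite (kind_in_right hy a' (esym b)) a' b !eqxx.
  + by apply/or4P/Or44; rewrite (kind_in_left hy a' b) a' b !eqxx.
- rewrite /same_tile cell_kind_tiling_profile /kind_in.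
  case/or4P => [/eqP <-|/and3P [k a b]|/and3P [k a b]|/and3P [k a b]].
  + exact: (mem_pblock_self tiling_P x).
  + move: k; case: existsP => [[z /andP [/andP [hz e] n]] _|_]; last by do !case: ifP.
    suff -> : y = z by [].
    apply: cell_eq; last by rewrite (eqP e) (eqP a).
    by apply: (@ord2_other_eq _ _ x.1); rewrite // eq_sym.
  + move: k; case: existsP => [_ //|_].
    case: existsP => [[z /andP [/andP [hz e] n]] _|_]; last by do !case: ifP.
    suff -> : y = z by [].
    by apply: cell_eq; [rewrite (eqP e) (eqP a) | rewrite (eqP n) (eqP b)].
  + move: k; case: existsP => [_ //|_]; case: existsP => [_ //|_].
    case: existsP => [[z /andP [/andP [hz e] n]] _|_ //].
    suff -> : y = z by [].
    apply: cell_eq; first by rewrite (eqP e) (eqP a).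
    by apply/succn_inj; rewrite (eqP n) (eqP b).
Qed.

Lemma same_tile_profile_sym (x y : cell 2 c) :
  same_tile profile_P x y = same_tile profile_P y x.
Proof. by rewrite -!mem_pblock_same_tile (mem_pblock_sym tiling_P). Qed.

Lemma profile_vertical (x : cell 2 c) :
  (cell_kind profile_P x == 3) = (cell_kind profile_P (other_row x.1, x.2) == 3).
Proof.
have xy : (other_row x.1, x.2).1 != x.1 by rewrite eq_sym other_row_neq.
have yx : x.1 != (other_row x.1, x.2).1 by rewrite other_row_neq.
apply/idP/idP => k.
- have h : same_tile profile_P x (other_row x.1, x.2).
    by apply/or4P/Or42; rewrite k yx eqxx.
  by rewrite same_tile_profile_sym in h; apply: same_tile_vertical h yx.
- have h : same_tile profile_P (other_row x.1, x.2) x.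
    by apply/or4P/Or42; rewrite k xy eqxx.
  by rewrite same_tile_profile_sym in h; apply: same_tile_vertical h xy.
Qed.

Lemma profile_right (x y : cell 2 c) : y.1 = x.1 -> y.2 = x.2.+1 :> nat ->
  (cell_kind profile_P x == 2) = (cell_kind profile_P y == 1).
Proof.
move=> e1 e2; apply/idP/idP => k.
- have h : same_tile profile_P x y by apply/or4P/Or43; rewrite k e1 e2 !eqxx.
  rewrite same_tile_profile_sym in h.
  by apply: same_tile_left h _; apply/eqP; exact: esym e2.
- have h : same_tile profile_P y x by apply/or4P/Or44; rewrite k e1 e2 !eqxx.
  rewrite same_tile_profile_sym in h.
  by apply: same_tile_right h _; apply/eqP; exact: e2.
Qed.

Lemma profile_last (x : cell 2 c) : x.2.+1 = c -> cell_kind profile_P x != 2.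
Proof.
move=> e; rewrite cell_kind_tiling_profile /kind_in; case: existsP => [_ //|_].
case: existsP => [[z /andP [_ /eqP n]]|_]; last by case: existsP.
by move: (ltn_ord z.2); rewrite n e ltnn.
Qed.

Lemma profile_first (x : cell 2 c) : x.2 = 0 :> nat -> cell_kind profile_P x != 1.
Proof.
move=> e; rewrite cell_kind_tiling_profile /kind_in; case: existsP => [_ //|_].
case: existsP => [_ //|_]; case: existsP => [[z /andP [_ /eqP n]]|_ //].
by move: n; rewrite e.
Qed.

Lemma profile_tatami j (hj : j < c) (hj1 : j.+1 < c) : tatami P ->
  cell_kind profile_P (top, Ordinal hj) != 3 ->
  cell_kind profile_P (top, Ordinal hj) != 2 ->
  cell_kind profile_P (bottom, Ordinal hj) != 2 ->
  cell_kind profile_P (top, Ordinal hj1) == 3.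
Proof.
set a := (top, _); set b := (top, _).
set c' := (bottom, _); set d := (bottom, Ordinal hj1).
move=> tatami_P n3 n2 n2'; apply/negPn/negP => n3'.
(* Otherwise the four cells around the point between the columns lie in
   pairwise distinct tiles. *)
have f1 : ~~ same_tile profile_P a b by apply: contra n2 => /same_tile_right; apply.
have f2 : ~~ same_tile profile_P a c' by apply: contra n3 => /same_tile_vertical; apply.
have f3 : ~~ same_tile profile_P a d.
  by apply/negP => /same_tile_row_or_column; rewrite /= gtn_eqF.
have f4 : ~~ same_tile profile_P b c'.
  by apply/negP => /same_tile_row_or_column; rewrite /= ltn_eqF.
have f5 : ~~ same_tile profile_P b d by apply: contra n3' => /same_tile_vertical; apply.
have f6 : ~~ same_tile profile_P c' d by apply: contra n2' => /same_tile_right; apply.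
case/andP: tatami_P => _ /forallP/(_ a) /forallP/(_ d).
rewrite /= eqxx /= => /negP; apply.
rewrite /= !inE !(eq_pblock_tiling tiling_P) !mem_pblock_same_tile.
by rewrite (negbTE f1) (negbTE f2) (negbTE f3) (negbTE f4) (negbTE f5) (negbTE f6).
Qed.

Lemma column_tiling_profile j (hj : j < c) : column profile_P j =
  (cell_kind profile_P (top, Ordinal hj), cell_kind profile_P (bottom, Ordinal hj)).
Proof.
by rewrite !cell_kind_tiling_profile /column (nth_tiling_profile P (Ordinal hj)).
Qed.

Lemma column_tiling_profile_beyond j : c <= j -> column profile_P j = end_profile.
Proof. by move=> h; rewrite column_default // size_tiling_profile. Qed.

Lemma tiling_profile_admissible : tatami P -> admissible profile_P.
Proof.
move=> tatami_P; have kind_lt (x : cell 2 c) : cell_kind profile_P x < 4.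
  by rewrite cell_kind_tiling_profile kind_in_lt.
have right_next (i : 'I_2) (j : 'I_c) : (cell_kind profile_P (i, j) == 2) =
    ((if val i == 0 then (column profile_P j.+1).1 else (column profile_P j.+1).2) == 1).
  have [hj|hj] := ltnP j.+1 c.
    by rewrite (column_tiling_profile hj) (profile_right (y := (i, Ordinal hj))) //;
      case: i => [[|[|//]] ?].
  have e : j.+1 = c by apply/eqP; rewrite eqn_leq hj ltn_ord.
  rewrite column_tiling_profile_beyond // (negbTE (profile_last (x := (i, j)) e)).
  by case: ifP.
split.
- move=> j; have [hj|hj] := ltnP j c; last by rewrite column_tiling_profile_beyond.
  rewrite column_tiling_profile /valid_profile /= !kind_lt.
  by rewrite (profile_vertical (top, _)) /= eqxx.
- move=> j; have [hj|hj] := leqP c j.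
    by rewrite !column_tiling_profile_beyond // ltnW.
  by rewrite (column_tiling_profile hj) /= (right_next top (Ordinal hj)).
- move=> j; have [hj|hj] := leqP c j.
    by rewrite !column_tiling_profile_beyond // ltnW.
  by rewrite (column_tiling_profile hj) /= (right_next bottom (Ordinal hj)).
- have [h|h] := ltnP 0 c; last by rewrite column_tiling_profile_beyond.
  by rewrite (column_tiling_profile h) /= !profile_first.
- move=> j a b e; have [h|h] := ltnP j.+1 c; last by rewrite column_tiling_profile_beyond.
  move: a b e; rewrite (column_tiling_profile (ltnW h)) (column_tiling_profile h) /=.
  exact: profile_tatami h tatami_P.
Qed.

Lemma tiling_of_profile : tiling_of c profile_P = P.
Proof.
rewrite -[RHS](equivalence_partition_pblock (md_tiling_partition tiling_P)).
rewrite /tiling_of /equivalence_partition.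
by apply: eq_imset => x; apply/setP => y; rewrite !inE mem_pblock_same_tile.
Qed.

End TilingProfile.

Lemma mem_profile_words n s :
  (s \in profile_words n) = (size s == n) && all (mem profiles) s.
Proof.
elim: n s => [|n IH] s; first by case: s.
apply/allpairsP/idP.
- by case=> -[y w] /= [hy hw ->]; rewrite /= eqSS hy -IH.
- case: s => [//|y w] /andP [/= hn /andP [hy hw]].
  by exists (y, w); split => //; rewrite IH -eqSS hn hw.
Qed.

Lemma profile_words_uniq n : uniq (profile_words n).
Proof.
elim: n => [//|n IH]; apply: (allpairs_uniq (f := fun (y : profile) w => y :: w)) => //.
by move=> [a b] [a' b'] _ _ /= [-> ->].
Qed.

Lemma mem_profiles a b : a < 4 -> b < 4 -> (a, b) \in profiles.
Proof. by move=> ha hb; apply: allpairs_f; rewrite mem_iota. Qed.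

Lemma T2_accepted_count c : T 2 c = accepted_count c 0.
Proof.
rewrite /T /accepted_count -size_filter cardE.
set A := enum _; have memA P : (P \in A) = tatami P by rewrite mem_enum inE.
have md_of P : P \in A -> md_tiling P by rewrite memA => /andP [].
have inj : {in A &, injective (@tiling_profile c)}.
  move=> P Q /md_of hP /md_of hQ e.
  by rewrite -(tiling_of_profile hP) -(tiling_of_profile hQ) e.
rewrite -(size_map (@tiling_profile c)); apply/perm_size/uniq_perm.
- by rewrite map_inj_in_uniq ?enum_uniq.
- by rewrite filter_uniq ?profile_words_uniq.
move=> s; rewrite mem_filter; apply/mapP/idP.
- case=> P hP ->; have tP := md_of P hP.
  rewrite memA in hP; rewrite mem_profile_words size_tiling_profile eqxx /=.
  apply/andP; split; first exact/accepts_admissible/tiling_profile_admissible.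
  apply/allP => y /mapP [j _ ->].
  by apply: mem_profiles; rewrite kind_in_lt.
- case/andP => /accepts_admissible adm; rewrite mem_profile_words => /andP [/eqP hs _].
  exists (tiling_of c s); last by rewrite tiling_profile_of.
  by rewrite memA tiling_of_tatami.
Qed.

Local Open Scope ring_scope.

Lemma coef_gf_of_recurrence (a : nat -> int)
  (a0 : a 0%N = 1) (a1 : a 1%N = 2) (a2 : a 2%N = 6) (a3 : a 3%N = 13)
  (rec : forall n, a n.+4 = 2 * a n.+3 + 2 * a n.+1 - a n) (n k : nat) : (k < n)%N ->
  ((1 - 2%:R *: 'X - 2%:R *: 'X^3 + 'X^4 : {poly int}) * \poly_(c < n) a c)`_k
  = (1 + 2%:R *: 'X^2 - 'X^3 : {poly int})`_k.
Proof.
move=> kn; rewrite !mulrDl !mulNr mul1r -!scalerAl !coefD !coefN !coefZ coefXM.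
rewrite !coefXnM !coef_poly coef1 !coefXn kn.
case: k kn => [|[|[|[|k]]]] kn /=.
- by rewrite a0.
- by rewrite a1 ltnW // a0.
- by rewrite a2 ltnW // a1.
- by rewrite (ltn_trans _ kn) // a3 a2 subnn (leq_trans _ kn) // a0; lia.
have -> : (k.+3 < n)%N by lia.
have -> : (k.+4 - 3 < n)%N by lia.
have -> : (k.+4 - 4 < n)%N by lia.
rewrite !subSS !subn0 rec; lia.
Qed.

Theorem lemma4 (n k : nat) : (k < n)%N ->
  ((1 - 2%:R *: 'X - 2%:R *: 'X^3 + 'X^4 : {poly int}) *
     \poly_(c < n) (T 2 c)%:R)`_k
  = (1 + 2%:R *: 'X^2 - 'X^3 : {poly int})`_k.
Proof.
have [a0 a1 a2 a3] := accepted_count_init.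
apply: coef_gf_of_recurrence => [||||m]; rewrite ?T2_accepted_count ?a0 ?a1 ?a2 ?a3 //.
apply/eqP; rewrite eq_sym subr_eq -!natrM -!natrD; apply/eqP; congr _%:R.
by rewrite accepted_count_rec.
Qed.
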